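(* For all integers $t,s\ge0$ and $r\ge1$, $$A_{t,s}(r)=\sum_{i=0}^{\min(t,s,r)}\binom{r+t-i}{r}\binom{r+s-i}{r}\binom{r}{i}(-1)^{i},$$ and the generating function satisfies $\sum_{t,s\ge0}A_{t,s}(r)x^ty^s=\dfrac{(1-xy)^r}{(1-x)^{r+1}(1-y)^{r+1}}$.
   Context: The numbers $A_{t,s}(r)$ (integers $t,s$, $r\ge1$) are defined by: $A_{t,s}(r)=0$ if $t<0$ or $s<0$; $A_{t,s}(1)=t+s+1$ for $t,s\ge0$; for $r\ge2$, $t,s\ge0$: $A_{t,s}(r)=\sum_{i=1}^{t}A_{t-i,s}(r-1)+\sum_{i=1}^{s}A_{t,s-i}(r-1)+A_{t,s}(r-1)$. *)

From mathcomp Require Import all_boot all_order all_algebra.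
Set Implicit Arguments. Unset Strict Implicit. Unset Printing Implicit Defensive.
Import GRing.Theory Num.Theory.

(* Aaux k t s = A_{t,s}(k+1).  Negative indices never occur since the sums
   range over i = 1..t and i = 1..s. *)
Fixpoint Aaux (k t s : nat) : nat :=
  match k with
  | 0 => t + s + 1
  | k'.+1 => \sum_(1 <= i < t.+1) Aaux k' (t - i) s
            + \sum_(1 <= i < s.+1) Aaux k' t (s - i)
            + Aaux k' t s
  end.

(* A t s r = A_{t,s}(r), meaningful for r >= 1. *)
Definition A (t s r : nat) : nat := Aaux r.-1 t s.

(* Bivariate formal power series over int: coefficient of x^t y^s. *)
Definition fps2 := nat -> nat -> int.

Definition fps2_mul (f g : fps2) : fps2 := fun t s =>
  (\sum_(i < t.+1) \sum_(j < s.+1) f i j * g (t - i)%N (s - j)%N)%R.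

(* A bivariate polynomial p : {poly {poly int}} in variables x (inner) and
   y (outer), viewed as a formal power series: coefficient of x^t y^s. *)
Definition fps2_of_poly (p : {poly {poly int}}) : fps2 := fun t s => ((p`_s)`_t)%R.

Definition X2 : {poly {poly int}} := ('X)%:P.
Definition Y2 : {poly {poly int}} := 'X.

From mathcomp Require Import all_boot all_order all_algebra.
From mathcomp Require Import zify ring.
From Stdlib Require Import FunctionalExtensionality.
Import GRing.Theory Num.Theory.

(* Let F_r be the generating function of A_{.,.}(r).  Multiplying by
   (1 - x)(1 - y) undoes the two partial sums in the recursion, so that
   F_(r+1) (1 - x)(1 - y) = F_r (1 - xy); with F_0 = 1/((1 - x)(1 - y)) this
   gives F_r = (1 - xy)^r / ((1 - x)(1 - y))^(r+1).  The coefficients of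
   1/((1 - x)(1 - y))^(r+1) are C(r+a, r) C(r+b, r), and expanding (1 - xy)^r
   binomially yields the alternating sum.
   Power series are handled through their truncations to the box [0, N]^2:
   bivariate polynomials compared coefficientwise on the box, a relation
   compatible with multiplication. *)

Local Open Scope ring_scope.

Lemma fps2_ext (f g : fps2) : f =2 g -> f = g.
Proof.
by move=> fg; apply: functional_extensionality => t; apply: functional_extensionality.
Qed.

Definition trunc2 (N : nat) (f : fps2) : {poly {poly int}} :=
  \poly_(j < N.+1) \poly_(i < N.+1) f i j.

Definition eq_box (N : nat) (p q : {poly {poly int}}) : Prop :=
  forall t s : nat, (t <= N)%N -> (s <= N)%N ->
  fps2_of_poly p t s = fps2_of_poly q t s.

Lemma fps2_of_poly_trunc2 N f t s : (t <= N)%N -> (s <= N)%N ->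
  fps2_of_poly (trunc2 N f) t s = f t s.
Proof. by move=> Ht Hs; rewrite /fps2_of_poly coef_poly ltnS Hs coef_poly ltnS Ht. Qed.

Lemma fps2_of_polyM p q :
  fps2_of_poly (p * q) =2 fps2_mul (fps2_of_poly p) (fps2_of_poly q).
Proof.
move=> t s; rewrite /fps2_of_poly /fps2_mul coefM coef_sum.
by under eq_bigr do rewrite coefM; rewrite exchange_big.
Qed.

Lemma eq_fps2_mul_le f f' g t s :
  (forall i j, (i <= t)%N -> (j <= s)%N -> f i j = f' i j) ->
  fps2_mul f g t s = fps2_mul f' g t s.
Proof.
move=> eq_ff'; apply: eq_bigr => i _; apply: eq_bigr => j _.
by rewrite eq_ff' // -ltnS.
Qed.

Lemma fps2_mul_trunc2 N f p t s : (t <= N)%N -> (s <= N)%N ->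
  fps2_mul f (fps2_of_poly p) t s = fps2_of_poly (trunc2 N f * p) t s.
Proof.
move=> Ht Hs; rewrite fps2_of_polyM; apply: eq_fps2_mul_le => i j Hi Hj.
by rewrite fps2_of_poly_trunc2 ?(leq_trans Hi) ?(leq_trans Hj).
Qed.

Lemma eq_box_sym {N p q} : eq_box N p q -> eq_box N q p.
Proof. by move=> Epq t s Ht Hs; rewrite Epq. Qed.

Lemma eq_box_trans {N p q u} : eq_box N p q -> eq_box N q u -> eq_box N p u.
Proof. by move=> Epq Equ t s Ht Hs; rewrite Epq ?Equ. Qed.

Lemma eq_box_mulr {N p q} c : eq_box N p q -> eq_box N (p * c) (q * c).
Proof.
move=> Epq t s Ht Hs; rewrite !fps2_of_polyM; apply: eq_fps2_mul_le => i j Hi Hj.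
by rewrite Epq ?(leq_trans Hi) ?(leq_trans Hj).
Qed.

Lemma eq_box_mull {N p q} c : eq_box N p q -> eq_box N (c * p) (c * q).
Proof. by rewrite ![c * _]mulrC; apply: eq_box_mulr. Qed.

Definition dx (f : fps2) : fps2 := fun t s =>
  f t s - (if t is t'.+1 then f t' s else 0).
Definition dy (f : fps2) : fps2 := fun t s =>
  f t s - (if s is s'.+1 then f t s' else 0).
Definition dxy (f : fps2) : fps2 := fun t s =>
  f t s - (if (t, s) is (t'.+1, s'.+1) then f t' s' else 0).
Definition d2 (f : fps2) : fps2 := dy (dx f).

Lemma fps2_of_polyM_1subX p : fps2_of_poly (p * (1 - X2)) =2 dx (fps2_of_poly p).
Proof.
move=> t s; rewrite mulrBr mulr1 /fps2_of_poly /dx !coefB /X2 coefMC coefMX.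
by case: t.
Qed.

Lemma fps2_of_polyM_1subY p : fps2_of_poly (p * (1 - Y2)) =2 dy (fps2_of_poly p).
Proof.
move=> t s; rewrite mulrBr mulr1 /fps2_of_poly /dy coefB /Y2 coefMX.
by case: s => [|s] //=; rewrite ?subr0 ?coefB.
Qed.

Lemma fps2_of_polyM_1subXY p :
  fps2_of_poly (p * (1 - X2 * Y2)) =2 dxy (fps2_of_poly p).
Proof.
move=> t s; rewrite mulrBr mulr1 /fps2_of_poly /dxy coefB mulrA /Y2 coefMX coefB.
case: s => [|s] /=; first by rewrite coef0; case: t.
by rewrite /X2 coefMC coefMX; case: t.
Qed.

Section BoxDifferences.

Variables (N : nat) (f : fps2).

Lemma eq_box_trunc2_1subX : eq_box N (trunc2 N f * (1 - X2)) (trunc2 N (dx f)).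
Proof.
move=> t s Ht Hs; rewrite fps2_of_polyM_1subX /dx !fps2_of_poly_trunc2 //.
by case: t Ht => [|t] Ht //; rewrite fps2_of_poly_trunc2 // ltnW.
Qed.

Lemma eq_box_trunc2_1subY : eq_box N (trunc2 N f * (1 - Y2)) (trunc2 N (dy f)).
Proof.
move=> t s Ht Hs; rewrite fps2_of_polyM_1subY /dy !fps2_of_poly_trunc2 //.
by case: s Hs => [|s] Hs //; rewrite fps2_of_poly_trunc2 // ltnW.
Qed.

Lemma eq_box_trunc2_1subXY :
  eq_box N (trunc2 N f * (1 - X2 * Y2)) (trunc2 N (dxy f)).
Proof.
move=> t s Ht Hs; rewrite fps2_of_polyM_1subXY /dxy !fps2_of_poly_trunc2 //.
by case: t s Ht Hs => [|t] [|s] Ht Hs //; rewrite fps2_of_poly_trunc2 // ltnW.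
Qed.

End BoxDifferences.

Definition D2 : {poly {poly int}} := (1 - X2) * (1 - Y2).

Lemma eq_box_trunc2_D2 N f : eq_box N (trunc2 N f * D2) (trunc2 N (d2 f)).
Proof.
rewrite /D2 mulrA; apply: eq_box_trans (eq_box_trunc2_1subY N (dx f)).
exact/eq_box_mulr/eq_box_trunc2_1subX.
Qed.

Definition negbin2 (r : nat) : fps2 := fun a b =>
  Posz 'C(r + a, r) * Posz 'C(r + b, r).

Lemma negbin20 : negbin2 0 = fun _ _ => 1.
Proof. by apply: fps2_ext => a b; rewrite /negbin2 !bin0. Qed.

Definition d1 (u : nat -> int) : nat -> int := fun a =>
  u a - (if a is a'.+1 then u a' else 0).

Lemma d2_sep (u v : nat -> int) :
  d2 (fun a b => u a * v b) = fun a b => d1 u a * d1 v b.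
Proof.
apply: fps2_ext => t s.
by rewrite /d2 /dy /dx /d1; case: t => [|t]; case: s => [|s]; ring.
Qed.

Lemma d1_binomial r :
  d1 (fun a => Posz 'C(r.+1 + a, r.+1)) = fun a => Posz 'C(r + a, r).
Proof.
apply: functional_extensionality => a; rewrite /d1.
case: a => [|a]; first by rewrite !addn0 !binn subr0.
by rewrite !addSn !addnS binS PoszD addrC addKr.
Qed.

Lemma d2_negbin2 r : d2 (negbin2 r.+1) = negbin2 r.
Proof. by rewrite /negbin2 d2_sep d1_binomial. Qed.

Lemma eq_box_negbin20_D2 N : eq_box N (trunc2 N (negbin2 0) * D2) 1.
Proof.
apply: eq_box_trans (eq_box_trunc2_D2 N _) _ => t s Ht Hs.
rewrite fps2_of_poly_trunc2 // /fps2_of_poly coef1 /d2 /dy /dx negbin20.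
by case: t s {Ht Hs} => [|t] [|s]; rewrite ?coef1 ?coef0 ?subrr ?subr0.
Qed.

Lemma eq_box_trunc2_D2exp N (F : nat -> fps2) c :
  F 0 = negbin2 0 ->
  (forall k, eq_box N (trunc2 N (d2 (F k.+1))) (trunc2 N (F k) * c)) ->
  forall k, eq_box N (trunc2 N (F k) * D2 ^+ k.+1) (c ^+ k).
Proof.
move=> F0 dF; elim=> [|k IHk].
  by rewrite expr1 expr0 F0; apply: eq_box_negbin20_D2.
rewrite exprS mulrA; apply: eq_box_trans (eq_box_mulr _ (eq_box_trunc2_D2 _ _)) _.
apply: eq_box_trans (eq_box_mulr _ (dF k)) _.
by rewrite mulrAC [c ^+ k.+1]exprSr; apply: eq_box_mulr.
Qed.

Lemma eq_box_negbin2_D2exp N r : eq_box N (trunc2 N (negbin2 r) * D2 ^+ r.+1) 1.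
Proof.
rewrite -(expr1n _ r); apply: eq_box_trunc2_D2exp => // k.
by rewrite d2_negbin2 mulr1.
Qed.

Definition cumul (f : fps2) : fps2 := fun t s =>
  \sum_(0 <= a < t) f a s + \sum_(0 <= b < s) f t b + f t s.

Lemma d2_cumul f : d2 (cumul f) = dxy f.
Proof.
apply: fps2_ext => t s.
rewrite /d2 /dy /dx /dxy /cumul.
by case: t => [|t]; case: s => [|s]; rewrite ?big_nat_recr //= ?(big_geq (leqnn 0)); ring.
Qed.

(* [A t s 0] computes A_{t,s}(1), so the case r = 0 is replaced by the series
   1/D2, from which the recursion also produces A_{.,.}(1). *)
Definition Aser (r : nat) : fps2 :=
  if r is 0 then negbin2 0 else fun t s => Posz (A t s r).

Lemma Aser_succ r : Aser r.+1 = cumul (Aser r).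
Proof.
apply: fps2_ext => t s.
case: r => [|r]; rewrite /cumul /=.
  by rewrite negbin20 !sumr_const_nat !subn0 /A /= !natz !PoszD.
have sum_rev (F : nat -> nat) n :
    (\sum_(1 <= i < n.+1) F (n - i) = \sum_(0 <= a < n) F a)%N.
  by rewrite big_add1 [RHS]big_nat_rev.
rewrite /A /= (sum_rev (Aaux r ^~ s)) sum_rev !PoszD.
by rewrite !(big_morph Posz PoszD (erefl 0%Z)).
Qed.

Lemma eq_box_Aser_D2exp N r :
  eq_box N (trunc2 N (Aser r) * D2 ^+ r.+1) ((1 - X2 * Y2) ^+ r).
Proof.
apply: eq_box_trunc2_D2exp => // k.
by rewrite Aser_succ d2_cumul; apply/eq_box_sym/eq_box_trunc2_1subXY.
Qed.

Lemma eq_box_Aser N r :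
  eq_box N (trunc2 N (Aser r)) ((1 - X2 * Y2) ^+ r * trunc2 N (negbin2 r)).
Proof.
rewrite -[trunc2 N (Aser r)]mulr1.
apply: eq_box_trans (eq_box_mull _ (eq_box_sym (eq_box_negbin2_D2exp N r))) _.
by rewrite mulrCA mulrC; apply/eq_box_mulr/eq_box_Aser_D2exp.
Qed.

Lemma fps2_of_poly_signM i p t s :
  fps2_of_poly ((-1) ^+ i * p) t s = fps2_of_poly p t s * (-1) ^+ i.
Proof.
rewrite /fps2_of_poly -signr_odd -[in RHS]signr_odd.
by case: (odd i); rewrite ?mulN1r ?mul1r ?mulrN1 ?mulr1 ?coefN.
Qed.

Lemma fps2_of_poly_XYexpM i p t s :
  fps2_of_poly ((X2 * Y2) ^+ i * p) t s =
  if (t < i)%N || (s < i)%N then 0 else fps2_of_poly p (t - i)%N (s - i)%N.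
Proof.
rewrite exprMn -mulrA /fps2_of_poly /X2 /Y2 -rmorphXn coefCM coefXnM coefXnM.
by case: (s < i)%N; rewrite ?coef0 ?mulr0 ?orbT //; case: (t < i)%N.
Qed.

Lemma fps2_of_poly_1subXYexpM r p t s :
  fps2_of_poly ((1 - X2 * Y2) ^+ r * p) t s =
  \sum_(0 <= i < (minn t (minn s r)).+1)
     fps2_of_poly p (t - i)%N (s - i)%N *+ 'C(r, i) * (-1) ^+ i.
Proof.
pose F i := fps2_of_poly ((X2 * Y2) ^+ i * p) t s *+ 'C(r, i) * (-1) ^+ i.
have -> : fps2_of_poly ((1 - X2 * Y2) ^+ r * p) t s = \sum_(0 <= i < r.+1) F i.
  rewrite exprBn mulr_suml /fps2_of_poly !coef_sum big_mkord.
  apply: eq_bigr => i _; rewrite expr1n mulr1 mulrnAl -mulrA !coefMn.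
  by rewrite -/(fps2_of_poly _ t s) fps2_of_poly_signM /F mulrnAl.
rewrite (big_cat_nat (n := (minn t (minn s r)).+1)) //=; last by lia.
rewrite [X in _ + X]big1_seq ?addr0 => [|i]; last first.
  rewrite mem_index_iota => /andP [Hmin Hir].
  by rewrite /F fps2_of_poly_XYexpM ifT ?mul0rn ?mul0r //; lia.
apply: eq_big_nat => i /andP [_ Hi].
by rewrite /F fps2_of_poly_XYexpM ifF //; lia.
Qed.

Lemma Aser_closed r t s :
  Aser r t s =
  \sum_(0 <= i < (minn t (minn s r)).+1)
     Posz ('C(r + t - i, r) * 'C(r + s - i, r) * 'C(r, i))%N * (-1) ^+ i.
Proof.
have [Ht Hs] : (t <= maxn t s)%N /\ (s <= maxn t s)%N by rewrite leq_maxl leq_maxr.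
rewrite -(fps2_of_poly_trunc2 _ (Aser r) _ _ Ht Hs) eq_box_Aser //.
rewrite fps2_of_poly_1subXYexpM; apply: eq_big_nat => i /andP [_ Hi].
rewrite fps2_of_poly_trunc2 /negbin2; [|lia|lia].
by rewrite -!addnBA; [rewrite !PoszM -[Posz 'C(r, i)]natz mulr_natr | lia | lia].
Qed.

Lemma Aser_gf r :
  fps2_mul (Aser r) (fps2_of_poly (D2 ^+ r.+1)) = fps2_of_poly ((1 - X2 * Y2) ^+ r).
Proof.
apply: fps2_ext => t s.
have [Ht Hs] : (t <= maxn t s)%N /\ (s <= maxn t s)%N by rewrite leq_maxl leq_maxr.
by rewrite (fps2_mul_trunc2 _ _ _ _ _ Ht Hs) eq_box_Aser_D2exp.
Qed.

Theorem mainTheorem3 (r : nat) : (1 <= r)%N ->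
  (forall t s : nat,
     Posz (A t s r) =
     (\sum_(0 <= i < (minn t (minn s r)).+1)
        Posz ('C(r + t - i, r) * 'C(r + s - i, r) * 'C(r, i))%N * (-1) ^+ i)%R)
  /\
  fps2_mul (fun t s => Posz (A t s r))
           (fps2_of_poly ((1 - X2) ^+ r.+1 * (1 - Y2) ^+ r.+1)%R)
  = fps2_of_poly ((1 - X2 * Y2) ^+ r)%R.
Proof.
case: r => [//|k] _; split; first exact: (Aser_closed k.+1).
by rewrite -exprMn; apply: (Aser_gf k.+1).
Qed.
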